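(* Consider the hybrid network model described in the context with $\bm u\equiv \bm 0$. Assume $|\phi(\cdot)|\le\phi_{max}$ and $$c_n>d^{in}\max\{\overline a^+,|\underline a^-|\}.$$ Then the neuronal state equation $$\dot{\bm x}=-C_n\bm x+\Gamma(A(t)\bm x),$$ with the piecewise constant weight matrix $A(t)$ generated by the weight update rule, is asymptotically stable: the origin is stable and every solution $\bm x(t)$ tends to $\bm 0$ as $t\to\infty$.
   Context: Let $\mathcal G=(\mathcal V,\mathcal E)$ be a directed graph with $N=|\mathcal V|$ nodes. Its edge set is split into disjoint sets $\mathcal E^+$ (excitatory) and $\mathcal E^-$ (inhibitory) with $\mathcal E=\mathcal E^+\cup\mathcal E^-$. The edge $(j,i)$ goes from node $j$ to node $i$. Let $d^{in}$ be the maximum in-degree of $\mathcal G$. Constants are $c_n>0$, $0<c_a^+,c_a^-<1$, $\theta>0$, $\tau>0$, and bounds $\underline a^-<\overline a^-<0<\underline a^+<\overline a^+$. The function $\phi:\mathbb R\to\mathbb R$ is bounded. For a scalar $y$, the clipping function is $[y]_{\underline y}^{\overline y}=\overline y$ if $y>\overline y$, $y$ if $\underline y\le y\le \overline y$, and $\underline y$ if $y<\underline y$. The threshold activation is $\gamma_\theta(s)=s$ if $|s|>\theta$ and $\gamma_\theta(s)=0$ otherwise; $\Gamma$ denotes $\gamma_\theta$ applied componentwise. The model (hybrid neuron/connectome dynamics): for $t\in(p\tau,(p+1)\tau]$, $p=0,1,2,\dots$, $$\dot x_i(t)=-c_nx_i(t)+\gamma_\theta\Big(\sum_{(j,i)\in\mathcal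 E}a_{ij}(t)x_j(t)\Big)+b_iu_i(t).$$ The weights are constant on each such interval and given by $$a_{ij}(t)=\big[c_a^-a_{ij}(p\tau)-\phi(x_i(p\tau)x_j(p\tau))\big]_{\underline a^-}^{\overline a^-}\quad\text{for }(j,i)\in\mathcal E^-,$$ $$a_{ij}(t)=\big[c_a^+a_{ij}(p\tau)+\phi(x_i(p\tau)x_j(p\tau))\big]_{\underline a^+}^{\overline a^+}\quad\text{for }(j,i)\in\mathcal E^+.$$ In addition, $a_{ij}\equiv0$ for non-edges, and $a_{ii}=0$. In vector form: $\dot{\bm x}=-C_n\bm x+\Gamma(A(t)\bm x)+B\bm u$, with $A=[a_{ij}]$ and $C_n=c_nI$. *)

From mathcomp Require Import all_boot all_order all_algebra.
From mathcomp Require Import all_classical all_reals all_analysis.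
Import Order.TTheory GRing.Theory Num.Theory.
Import numFieldNormedType.Exports.
Set Implicit Arguments.
Unset Strict Implicit.
Unset Printing Implicit Defensive.
Local Open Scope classical_set_scope.
Local Open Scope ring_scope.

(* Nodes are 'I_N.  A relation E : rel 'I_N encodes edges: E j i means the
   directed edge (j,i) from node j to node i.  Weights are stored as
   a i j = a_ij (weight of the edge (j,i)). *)

Definition clip (R : realType) (lo hi y : R) : R :=
  if hi < y then hi else if y < lo then lo else y.

Definition gamma_th (R : realType) (th s : R) : R :=
  if th < `|s| then s else 0.

Definition indeg (N : nat) (E : rel 'I_N) (i : 'I_N) : nat :=
  #|[set j : 'I_N | E j i]%SET|.
Definition max_indeg (N : nat) (E : rel 'I_N) : nat :=
  (\max_(i < N) indeg E i)%N.

Definition weight_update (R : realType) (N : nat) (Ep Em : rel 'I_N)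
  (cap cam lom him lop hip : R) (phi : R -> R)
  (a : 'I_N -> 'I_N -> R) (x : 'I_N -> R) : 'I_N -> 'I_N -> R :=
  fun i j =>
    if i == j then 0
    else if Em j i then clip lom him (cam * a i j - phi (x i * x j))
    else if Ep j i then clip lop hip (cap * a i j + phi (x i * x j))
    else 0.

(* weights p = A(p tau) : weights 0 = a0 is the initial weight matrix A(0),
   and weights p.+1 = A(t) for t in (p tau, (p+1) tau]. *)
Fixpoint weights (R : realType) (N : nat) (Ep Em : rel 'I_N)
  (cap cam lom him lop hip tau : R) (phi : R -> R)
  (a0 : 'I_N -> 'I_N -> R) (x : R -> 'I_N -> R) (p : nat)
  : 'I_N -> 'I_N -> R :=
  match p with
  | 0%N => a0
  | q.+1 => weight_update Ep Em cap cam lom him lop hip phi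
              (weights Ep Em cap cam lom him lop hip tau phi a0 x q)
              (x (q%:R * tau))
  end.

Definition is_solution (R : realType) (N : nat) (Ep Em : rel 'I_N)
  (cn cap cam th tau lom him lop hip : R) (phi : R -> R)
  (a0 : 'I_N -> 'I_N -> R) (x : R -> 'I_N -> R) : Prop :=
  (forall i, {within [set t : R | 0 <= t], continuous (fun t => x t i)}) /\
  (forall (p : nat) (t : R), p%:R * tau < t -> t < p.+1%:R * tau ->
     forall i : 'I_N,
       is_derive t 1 (fun s => x s i)
         (- cn * x t i +
          gamma_th th (\sum_(j < N | Ep j i || Em j i)
             weights Ep Em cap cam lom him lop hip tau phi a0 x p.+1 i j
             * x t j))).

From mathcomp Require Import all_boot all_order all_algebra.
From mathcomp Require Import all_classical all_reals all_analysis.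
From mathcomp Require Import ring lra.
Import Order.TTheory GRing.Theory Num.Theory.
Import numFieldNormedType.Exports.
Local Open Scope classical_set_scope.
Local Open Scope ring_scope.

(* Each coordinate of a solution satisfies x_i' = -c_n x_i + f_i with
   |f_i| <= D max_j |x_j|, where D = d^in max(a^+max, |a^-min|) < c_n because the
   clipped weights are bounded.  So the state stays strictly below the barrier
   M / (1 + a t), a = (c_n - D)/2, for every M exceeding the initial values: at a
   first touching time the barrier decreases at relative rate at most a, while
   the dynamics push |x_i| down at relative rate at least c_n - D = 2a.  The
   first touching time is handled by real induction on [0, +oo).  The barrier is
   at most M (stability) and tends to 0 (attractivity); a rational barrier avoids
   exponentials. *)

Definition barrier {R : realFieldType} (M a t : R) : R := M / (1 + a * t).

Section BarrierTheory.
Context {R : realFieldType} {M a : R}.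

Lemma barrier_den_gt0 {t : R} : 0 <= a -> 0 <= t -> 0 < 1 + a * t.
Proof. by move=> a0 t0; rewrite ltr_pwDl // mulr_ge0. Qed.

Lemma barrier_gt0 {t : R} : 0 < M -> 0 <= a -> 0 <= t -> 0 < barrier M a t.
Proof. by move=> M0 a0 t0; rewrite divr_gt0 // barrier_den_gt0. Qed.

Lemma barrier_ge0 {t : R} : 0 <= M -> 0 <= a -> 0 <= t -> 0 <= barrier M a t.
Proof. by move=> M0 a0 t0; rewrite divr_ge0 // ltW // barrier_den_gt0. Qed.

Lemma barrier_le {t : R} : 0 <= M -> 0 <= a -> 0 <= t -> barrier M a t <= M.
Proof.
move=> M0 a0 t0; rewrite ler_pdivrMr ?barrier_den_gt0 // ler_peMr //.
by rewrite lerDl mulr_ge0.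
Qed.

Lemma barrier_sub {s t : R} : 0 <= a -> 0 <= s -> 0 <= t ->
  barrier M a s - barrier M a t = a * (t - s) * barrier M a s / (1 + a * t).
Proof. by move=> a0 s0 t0; rewrite /barrier; field; rewrite !gt_eqF ?barrier_den_gt0. Qed.

Lemma barrier_drop {s t : R} : 0 <= M -> 0 <= a -> 0 <= s -> s <= t ->
  barrier M a s - barrier M a t <= a * (t - s) * barrier M a s.
Proof.
move=> M0 a0 s0 st; have t0 := le_trans s0 st.
rewrite barrier_sub // ler_pdivrMr ?barrier_den_gt0 // ler_peMr ?lerDl ?mulr_ge0 //.
all: by rewrite ?subr_ge0 // invr_ge0 ltW ?barrier_den_gt0.
Qed.

Lemma barrier_le_mono {s t : R} : 0 <= M -> 0 <= a -> 0 <= s -> s <= t ->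
  barrier M a t <= barrier M a s.
Proof.
move=> M0 a0 s0 st; have t0 := le_trans s0 st.
rewrite -subr_ge0 barrier_sub // divr_ge0 ?mulr_ge0 ?subr_ge0 ?barrier_ge0 //.
all: by rewrite ?invr_ge0 ltW ?barrier_den_gt0.
Qed.

Lemma barrier_lipschitz {s t : R} : 0 <= M -> 0 <= a -> 0 <= s -> s <= t ->
  barrier M a s - barrier M a t <= M * a * (t - s).
Proof.
move=> M0 a0 s0 st; apply: (le_trans (barrier_drop M0 a0 s0 st)).
have Bs := barrier_le M0 a0 s0.
have : 0 <= a * (t - s) by rewrite mulr_ge0 ?subr_ge0.
nra.
Qed.

End BarrierTheory.

Lemma sgr_mul_le_norm {R : realDomainType} (x y : R) : Num.sg x * y <= `|y|.
Proof.
rewrite (le_trans (ler_norm _)) // normrM normr_sg.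
by case: (_ != 0); rewrite ?mul1r ?mul0r.
Qed.
Lemma barrier_cvg0 {R : realFieldType} {M a : R} : 0 <= M -> 0 < a ->
  barrier M a t @[t --> +oo] --> 0.
Proof.
move=> M0 a0; apply/cvgrPdist_lt => e e0.
near=> t.
have tb : M / (a * e) <= t by near: t; apply: nbhs_pinfty_ge; rewrite num_real.
have t0 : 0 <= t by apply: le_trans tb; rewrite divr_ge0 // ltW // mulr_gt0.
rewrite sub0r normrN ger0_norm ?barrier_ge0 ?(ltW a0) //.
rewrite ltr_pdivrMr ?barrier_den_gt0 ?(ltW a0) //.
move: tb; rewrite ler_pdivrMr ?mulr_gt0 // => tb.
nra.
Unshelve. all: by end_near.
Qed.

Lemma real_induction_ge0 (R : realType) (P : R -> Prop) :
  (forall T, 0 <= T -> (forall s, 0 <= s -> s < T -> P s) -> P T) ->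
  (forall T, 0 <= T -> (forall s, 0 <= s -> s <= T -> P s) ->
     exists2 d, 0 < d & forall s, T < s -> s < T + d -> P s) ->
  forall t, 0 <= t -> P t.
Proof.
move=> closed open t t0; apply: contrapT => Pt.
pose S := [set T | 0 <= T /\ forall s, 0 <= s -> s <= T -> P s].
have S0 : S 0.
  split=> // s s0 s_le0; have -> : s = 0 by apply/eqP; rewrite eq_le s_le0 s0.
  by apply: closed => // u u0; rewrite ltNge u0.
have hS : has_sup S.
  split; first by exists 0.
  exists t => T [_ PT]; rewrite leNgt; apply/negP => tT.
  exact/Pt/PT/ltW.
set T := sup S.
have T0 : 0 <= T := sup_upper_bound hS S0.
have below s : 0 <= s -> s < T -> P s.
  move=> s0 sT; have Ts : 0 < T - s by rewrite subr_gt0.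
  have [e [_ Pe] Te] := sup_adherent Ts hS.
  by apply: Pe => //; rewrite -/T in Te; lra.
have PT : P T by apply: closed.
have [d d0 Pd] : exists2 d, 0 < d & forall s, T < s -> s < T + d -> P s.
  apply: open => // s s0; rewrite le_eqVlt => /predU1P[-> //|]; exact: below.
have : S (T + d / 2).
  split=> [|s s0 sTd]; first by lra.
  case: (ltgtP s T) => [sT|Ts|->]; [exact: below|apply: Pd => //; lra|exact: PT].
move=> /(sup_upper_bound hS); rewrite -/T; lra.
Qed.

Lemma within_ge0_continuous_dist_lt {R : realType} {f : R -> R} {T e : R} :
  {within [set t : R | 0 <= t], continuous f} -> 0 <= T -> 0 < e ->
  exists2 d, 0 < d & forall s, 0 <= s -> `|s - T| < d -> `|f s - f T| < e.
Proof.
move=> /subspace_continuousP cf T0 e0.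
have /nbhs_normP [d /= d0 Hd] : \forall s \near T, 0 <= s -> `|f T - f s| < e.
  exact: cvgr_dist_lt (cf T T0) _ e0.
by exists d => // s s0 sT; rewrite distrC; apply: Hd; rewrite //= distrC.
Qed.

Section BarrierDecay.
Variables (R : realType) (N : nat) (cn D tau M : R).
Variables (x : R -> 'I_N -> R) (F : nat -> R -> 'I_N -> R).
Hypotheses (D_ge0 : 0 <= D) (D_lt_cn : D < cn) (tau_gt0 : 0 < tau) (M_gt0 : 0 < M).
Hypothesis x_cont :
  forall i, {within [set t : R | 0 <= t], continuous (fun t => x t i)}.
Hypothesis x_deriv : forall (p : nat) t, p%:R * tau < t -> t < p.+1%:R * tau ->
  forall i, is_derive t 1 (fun s => x s i) (- cn * x t i + F p t i).
Hypothesis F_le : forall p t i (V : R), 0 <= V -> (forall j, `|x t j| <= V) ->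
  `|F p t i| <= D * V.
Hypothesis x0_lt : forall i, `|x 0 i| < M.

Local Notation a := ((cn - D) / 2).
Local Notation B := (barrier M a).

Let a_gt0 : 0 < a. Proof. by rewrite divr_gt0 // subr_gt0. Qed.
Let a_ge0 : 0 <= a. Proof. exact: ltW. Qed.
Let M_ge0 : 0 <= M. Proof. exact: ltW. Qed.

Let under_barrier t := forall i, `|x t i| < B t.

Lemma solution_mvt T i : 0 < T ->
  exists2 d, 0 < d <= T & forall s, T - d < s -> s < T ->
    exists p, exists2 c, s < c < T &
      x T i - x s i = (T - s) * (- cn * x c i + F p c i).
Proof.
move=> T_gt0.
have T_reached : exists n : nat, T <= n%:R * tau.
  exists (Num.Def.archi_bound (T / tau)).
  have := archi_boundP (divr_ge0 (ltW T_gt0) (ltW tau_gt0)).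
  by rewrite ltr_pdivrMr // => /ltW.
have [[|p] Tm m_min] := ex_minnP T_reached.
  by move: Tm; rewrite mul0r leNgt T_gt0.
have pT : p%:R * tau < T by rewrite ltNge; apply/negP => /m_min; rewrite ltnn.
have p0 : 0 <= p%:R * tau by rewrite mulr_ge0 // ltW.
(* (T - d, T) lies in a single switching interval, where x is differentiable. *)
exists (T - p%:R * tau); first by rewrite subr_gt0 pT gerBl.
move=> s ps sT; rewrite opprB addrCA subrr addr0 in ps.
have deriv u : u \in `]s, T[ ->
    is_derive u 1 (fun v => x v i) (- cn * x u i + F p u i).
  rewrite in_itv /= => /andP[su uT].
  by apply: x_deriv; [exact: lt_trans su|exact: lt_le_trans Tm].
have cont : {within `[s, T], continuous (fun v => x v i)}.
  apply: continuous_subspaceW (x_cont i) => u /=.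
  by rewrite in_itv /= => /andP[su _]; lra.
have [c + Hc] := MVT sT deriv cont.
by rewrite in_itv /= => sc; exists p; exists c; rewrite // Hc mulrC.
Qed.

Lemma touching_slope T i : 0 < T ->
  (forall s, 0 <= s -> s < T -> under_barrier s) -> B T <= `|x T i| ->
  exists2 d, 0 < d <= T & forall s, T - d < s -> s < T ->
    exists p, exists2 c, s < c < T &
      - a * B s < Num.sg (x T i) * (- cn * x c i + F p c i).
Proof.
move=> T_gt0 below BT_le.
have [d /andP[d_gt0 d_le] mvt] := solution_mvt T i T_gt0.
exists d => [|s ds sT]; first by rewrite d_gt0.
have s0 : 0 <= s by lra.
have [p [c sc x_sT]] := mvt s ds sT; exists p; exists c => //.
have Ts_gt0 : 0 < T - s by rewrite subr_gt0.
rewrite -(ltr_pM2l Ts_gt0) [in X in _ < X]mulrCA -x_sT mulrBr -normrEsg.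
have := barrier_drop M_ge0 a_ge0 s0 (ltW sT).
have := sgr_mul_le_norm (x T i) (x s i); have := below s s0 sT i; lra.
Qed.

Lemma under_barrier_closed T : 0 < T ->
  (forall s, 0 <= s -> s < T -> under_barrier s) -> under_barrier T.
Proof.
move=> T_gt0 below i; rewrite ltNge; apply/negP => BT_le.
have T0 := ltW T_gt0.
have BT_gt0 : 0 < B T := barrier_gt0 M_gt0 a_ge0 T0.
have cn_gt0 : 0 < cn := le_lt_trans D_ge0 D_lt_cn.
have aD_gt0 : 0 < a + D by have := D_ge0; have := D_lt_cn; lra.
pose rho := a * B T / (2 * cn).
have rho_gt0 : 0 < rho by apply: divr_gt0; apply: mulr_gt0.
have [d1 d1_gt0 near_xT] := within_ge0_continuous_dist_lt (x_cont i) T0 rho_gt0.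
have [d /andP[d_gt0 d_le] slope] := touching_slope T i T_gt0 below BT_le.
pose gap := B T / (2 * (a + D) * M).
have gap_gt0 : 0 < gap by rewrite divr_gt0 // !mulr_gt0.
have [L [L_gt0 [L_d L_d1 L_gap]]] : exists L, 0 < L /\ [/\ L < d, L < d1 & L < gap].
  pose m := Num.min (Num.min d d1) gap.
  have m_gt0 : 0 < m by rewrite !lt_min d_gt0 d1_gt0 gap_gt0.
  have [m_d [m_d1 m_gap]] : m <= d /\ m <= d1 /\ m <= gap.
    by have := le_refl m; rewrite {2}/m !le_min => /andP[/andP[-> ->] ->].
  by exists (m / 2); split; [|split]; lra.
have sT : T - L < T by lra.
have [|p [c /andP[sc cT] slope_c]] := slope (T - L) _ sT; first by lra.
have s0 : 0 <= T - L by lra.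
have c0 : 0 <= c by lra.
have F_c : `|F p c i| <= D * B c.
  by apply: F_le => [|j]; [exact: barrier_ge0|exact/ltW/below].
have lip := barrier_lipschitz M_ge0 a_ge0 s0 (ltW sT).
have Bc_le : B c <= B (T - L) := barrier_le_mono M_ge0 a_ge0 s0 (ltW sc).
have xc_xT : `|x c i - x T i| < rho.
  by apply: near_xT => //; rewrite distrC ger0_norm; lra.
have sg_xc : `|x T i| - `|x c i - x T i| <= Num.sg (x T i) * x c i.
  have := sgr_mul_le_norm (x T i) (x T i - x c i).
  by rewrite -normrN opprB mulrBr -normrEsg; lra.
have cn_xc : cn * (B T - rho) <= cn * (Num.sg (x T i) * x c i) by rewrite ler_pM2l //; lra.
have cn_rho : cn * rho = a * B T / 2 by rewrite /rho; field; rewrite gt_eqF.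
have D_Bc : D * B c <= D * B (T - L) by rewrite ler_wpM2l.
have aD_lip : (a + D) * (B (T - L) - B T) <= (a + D) * (M * a * (T - (T - L))).
  by rewrite ler_wpM2l // ltW.
have aL_small : a * (L * (2 * (a + D) * M)) < a * B T.
  by rewrite ltr_pM2l // -ltr_pdivlMr // mulr_gt0 // mulr_gt0.
have := sgr_mul_le_norm (x T i) (F p c i); rewrite mulrDr (mulrCA (Num.sg _)) in slope_c.
have := D_ge0; lra.
Qed.

Lemma under_barrier_open T : 0 <= T -> under_barrier T ->
  exists2 d, 0 < d & forall s, T < s -> s < T + d -> under_barrier s.
Proof.
move=> T0 xT.
have : \forall s \near T, forall i, 0 <= s -> T <= s -> `|x s i| < B s.
  apply: (@filter_forall R _ (fun i s => 0 <= s -> T <= s -> `|x s i| < B s)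
    (nbhs T) (nbhs_filter T)) => i.
  have gap_gt0 : 0 < B T - `|x T i| by rewrite subr_gt0.
  have [d1 d1_gt0 near_xT] := within_ge0_continuous_dist_lt (x_cont i) T0
    (divr_gt0 gap_gt0 (ltr0Sn _ 1)).
  have Ma_gt0 : 0 < 2 * M * a := mulr_gt0 (mulr_gt0 (ltr0Sn _ 1) M_gt0) a_gt0.
  have d2_gt0 : 0 < (B T - `|x T i|) / (2 * M * a) by rewrite divr_gt0.
  apply/nbhs_normP; exists (Num.min d1 ((B T - `|x T i|) / (2 * M * a))) => /=.
    by rewrite lt_min d1_gt0 d2_gt0.
  move=> s /=; rewrite lt_min distrC => /andP[sd1 sd2] s0 Ts.
  have lip := barrier_lipschitz M_ge0 a_ge0 T0 Ts.
  have xs_xT := near_xT s s0 sd1.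
  rewrite ger0_norm ?subr_ge0 // ltr_pdivlMr // in sd2.
  have : `|x s i| <= `|x T i| + `|x s i - x T i|.
    by rewrite -[x s i in leLHS](subrK (x T i)) addrC ler_normD.
  lra.
move=> /nbhs_normP[d /= d_gt0 near_T]; exists d => // s Ts sTd i.
by apply: near_T; [rewrite /ball_ /= distrC ger0_norm|..]; lra.
Qed.

Lemma barrier_decay t : 0 <= t -> forall i, `|x t i| < B t.
Proof.
apply: (@real_induction_ge0 _ under_barrier) => [T T0 below|T T0 below]; last first.
  exact: under_barrier_open (below T T0 (lexx T)).
case: (ltgtP 0 T) T0 => [T_gt0 _|//|<- _]; first exact: under_barrier_closed.
by move=> i; rewrite /barrier mulr0 addr0 divr1.
Qed.

End BarrierDecay.

Arguments barrier_decay {R N cn D tau M x F}.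

Lemma clip_itv {R : realType} {lo hi : R} (y : R) : lo <= hi -> lo <= clip lo hi y <= hi.
Proof.
move=> lo_hi; rewrite /clip; case: ltP => [_|y_hi]; first by rewrite lo_hi lexx.
by case: ltP => [_|lo_y]; rewrite ?lexx ?lo_y.
Qed.

Lemma norm_gamma_th_le {R : realType} (th s : R) : `|gamma_th th s| <= `|s|.
Proof. by rewrite /gamma_th; case: ifP; rewrite ?normr0. Qed.

Lemma norm_weight_update_le {R : realType} {N : nat} (Ep Em : rel 'I_N)
    (cap cam lom him lop hip : R) (phi : R -> R) a y i j :
  lom < him -> him < 0 -> 0 < lop -> lop < hip ->
  `|weight_update Ep Em cap cam lom him lop hip phi a y i j| <= Num.max hip `|lom|.
Proof.
move=> lom_him him_lt0 lop_gt0 lop_hip.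
have hip_le : hip <= Num.max hip `|lom| by rewrite le_max lexx.
have lom_le : `|lom| <= Num.max hip `|lom| by rewrite le_max lexx orbT.
have lomE : `|lom| = - lom by rewrite ltr0_norm // (lt_trans lom_him).
rewrite /weight_update; case: (i == j); first by rewrite normr0; lra.
case: (Em j i).
  have /andP[] := clip_itv (cam * a i j - phi (y i * y j)) (ltW lom_him).
  by rewrite ler_norml; lra.
case: (Ep j i); last by rewrite normr0; lra.
have /andP[] := clip_itv (cap * a i j + phi (y i * y j)) (ltW lop_hip).
by rewrite ler_norml; lra.
Qed.

Lemma norm_sum_indeg_le {R : realType} {N : nat} (E : rel 'I_N) (w y : 'I_N -> R)
    (wmax V : R) i :
  0 <= wmax -> 0 <= V -> (forall j, E j i -> `|w j| <= wmax) -> (forall j, `|y j| <= V) ->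
  `|\sum_(j < N | E j i) w j * y j| <= (max_indeg E)%:R * wmax * V.
Proof.
move=> wmax_ge0 V_ge0 w_le y_le.
apply: le_trans (ler_norm_sum _ _ _) _.
apply: le_trans (_ : \sum_(j < N | E j i) wmax * V <= _).
  by apply: ler_sum => j Eji; rewrite normrM ler_pM ?w_le.
rewrite sumr_const -mulrnAl ler_wpM2r // mulr_natl; apply: ler_wpMn2l => //.
rewrite (_ : #|_| = indeg E i); last by rewrite /indeg cardsE.
exact: leq_bigmax.
Qed.

Lemma solution_barrier_decay {R : realType} {N : nat} {Ep Em : rel 'I_N}
    {cn cap cam th tau lom him lop hip : R} {phi : R -> R} {a0} {x} :
  is_solution Ep Em cn cap cam th tau lom him lop hip phi a0 x ->
  0 < tau -> lom < him -> him < 0 -> 0 < lop -> lop < hip ->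
  let D := (max_indeg (fun j i => Ep j i || Em j i))%:R * Num.max hip `|lom| in
  D < cn -> forall M, 0 < M -> (forall i, `|x 0 i| < M) ->
  forall t, 0 <= t -> forall i, `|x t i| < barrier M ((cn - D) / 2) t.
Proof.
move=> [x_cont x_deriv] tau_gt0 lom_him him_lt0 lop_gt0 lop_hip D D_lt_cn M M_gt0 x0_lt.
have wmax_ge0 : 0 <= Num.max hip `|lom| by rewrite le_max ltW // (lt_trans lop_gt0).
have D_ge0 : 0 <= D by rewrite mulr_ge0.
apply: (barrier_decay D_ge0 D_lt_cn tau_gt0 M_gt0 x_cont x_deriv _ x0_lt).
move=> p t i V V_ge0 x_le; apply: le_trans (norm_gamma_th_le _ _) _.
apply: norm_sum_indeg_le => // j _.
exact: norm_weight_update_le.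
Qed.

Theorem theorem1 (R : realType) (N : nat) (Ep Em : rel 'I_N)
  (cn cap cam th tau lom him lop hip phimax : R) (phi : R -> R) :
  (forall i j : 'I_N, ~~ (Ep j i && Em j i)) ->
  0 < cn -> 0 < cap -> cap < 1 -> 0 < cam -> cam < 1 ->
  0 < th -> 0 < tau ->
  lom < him -> him < 0 -> 0 < lop -> lop < hip ->
  (forall s, `|phi s| <= phimax) ->
  (max_indeg (fun j i => Ep j i || Em j i))%:R * Num.max hip `|lom| < cn ->
  forall a0 : 'I_N -> 'I_N -> R,
    (forall eps : R, 0 < eps -> exists2 delta : R, 0 < delta &
       forall x : R -> 'I_N -> R,
         is_solution Ep Em cn cap cam th tau lom him lop hip phi a0 x ->
         (forall i, `|x 0 i| < delta) ->
         forall t, 0 <= t -> forall i, `|x t i| < eps) /\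
    (forall x : R -> 'I_N -> R,
       is_solution Ep Em cn cap cam th tau lom him lop hip phi a0 x ->
       forall i, x t i @[t --> +oo] --> 0).
Proof.
move=> _ _ _ _ _ _ _ tau_gt0 lom_him him_lt0 lop_gt0 lop_hip _ D_lt_cn a0.
set D := _ * _ in D_lt_cn.
have a_gt0 : 0 < (cn - D) / 2 by rewrite divr_gt0 // subr_gt0.
split=> [eps eps_gt0|x sol i].
  exists eps => // x sol x0_lt t t0 i.
  apply: lt_le_trans (barrier_le (ltW eps_gt0) (ltW a_gt0) t0).
  exact: solution_barrier_decay sol tau_gt0 lom_him him_lt0 lop_gt0 lop_hip D_lt_cn _ eps_gt0 x0_lt _ t0 i.
pose M := 1 + \sum_j `|x 0 j|.
have x0_lt j : `|x 0 j| < M.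
  rewrite /M (bigD1 j) //= addrCA ltrDl ltr_pwDl //.
  by rewrite sumr_ge0 // => k _; rewrite normr_ge0.
have M_gt0 : 0 < M := le_lt_trans (normr_ge0 _) (x0_lt i).
have /cvgr0Pnorm_lt B_small := barrier_cvg0 (ltW M_gt0) a_gt0.
apply/cvgr0Pnorm_lt => e e_gt0; near=> t.
have t0 : 0 <= t by near: t; apply: nbhs_pinfty_ge; rewrite num_real.
apply: lt_trans (le_lt_trans (ler_norm _) _).
  exact: solution_barrier_decay sol tau_gt0 lom_him him_lt0 lop_gt0 lop_hip D_lt_cn _ M_gt0 x0_lt _ t0 i.
by near: t; apply: B_small.
Unshelve. all: by end_near.
Qed.
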